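(* Let $V$ be a finite set with $n=|V|$ elements and let $p_v\in[1/n^2,1]$ for each $v\in V$. Define $p=\frac1n\min_{v\in V}p_v$, and for each $v\in V$ define $\bar p_v=\min\{(1+\frac1n)p_v,1\}$, $t_v=\lceil p_v/p\rceil$ and $q_v=1-(1-p)^{t_v}$. Then for every $v\in V$, $$p_v\left(1-\tfrac1e\right)\le q_v\le \bar p_v\le p_v\left(1+\tfrac1n\right).$$ *)

From HB Require Import structures.
From mathcomp Require Import all_boot all_order all_algebra.
From mathcomp Require Import all_classical all_reals all_analysis.
Set Implicit Arguments. Unset Strict Implicit. Unset Printing Implicit Defensive.
Import Order.TTheory GRing.Theory Num.Theory.
Local Open Scope ring_scope.

(* min_{w in V} pv w, computed as a fold of Order.min starting from the
   value pv v0 at some element v0 of V (so it is the genuine minimum and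
   does not depend on v0). *)
Definition minp (V : finType) (R : realType) (pv : V -> R) (v0 : V) : R :=
  \big[Order.min/pv v0]_(w : V) pv w.

Definition pp (V : finType) (R : realType) (pv : V -> R) (v0 : V) : R :=
  (#|V|%:R)^-1 * minp pv v0.

Definition pbar (V : finType) (R : realType) (pv : V -> R) (v : V) : R :=
  Order.min ((1 + (#|V|%:R)^-1) * pv v) 1.

Definition tv (V : finType) (R : realType) (pv : V -> R) (v : V) : int :=
  Num.ceil (pv v / pp pv v).

Definition qv (V : finType) (R : realType) (pv : V -> R) (v : V) : R :=
  1 - (1 - pp pv v) ^ (tv pv v).

From HB Require Import structures.
From mathcomp Require Import all_boot all_order all_algebra.
From mathcomp Require Import all_classical all_reals all_analysis.
From mathcomp Require Import lra.

Set Implicit Arguments.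
Unset Strict Implicit.
Unset Printing Implicit Defensive.
Import Order.TTheory GRing.Theory Num.Theory.
Local Open Scope ring_scope.

(* With t_v = ceil (p_v / p) we have p_v <= t_v p <= p_v + p.  The upper bound
   q_v <= t_v p <= p_v + p <= (1 + 1/n) p_v is Bernoulli's inequality, and the
   lower bound follows from (1 - p)^t_v <= exp (- t_v p) <= exp (- p_v) together
   with the convexity of exp on [-1, 0], which puts exp (- x) below the chord
   1 - x (1 - 1/e) for x in [0, 1]. *)

Lemma bernoulli_ineq (R : realDomainType) (y : R) (k : nat) :
  y <= 1 -> 1 - k%:R * y <= (1 - y) ^+ k.
Proof.
move=> y1; elim: k => [|k IHk]; first by rewrite expr0 mul0r subr0.
rewrite exprS -natr1.
have : 0 <= (1 - y) * ((1 - y) ^+ k - (1 - k%:R * y)) by apply: mulr_ge0; lra.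
have : 0 <= k%:R :> R by [].
nra.
Qed.

Lemma expR_chord (R : realType) (x : R) :
  0 <= x <= 1 -> expR (- x) <= 1 - x * (1 - (expR 1)^-1).
Proof.
move=> /andP[x0 x1].
have := convex_expR (Itv01 x0 x1) (-1) 0.
rewrite !convRE /= expR0 mulr1 mulrN1 mulr0 addr0 (expRN 1).
by move/le_trans; apply; rewrite /unstable.onem; lra.
Qed.

Lemma onemX_le_expR (R : realType) (y : R) (k : nat) :
  y <= 1 -> (1 - y) ^+ k <= expR (- (k%:R * y)).
Proof.
move=> y1; rewrite -mulrN expRM_natl.
apply: lerXn2r; rewrite ?nnegrE ?expR_ge0 ?subr_ge0 //.
exact: expR_ge1Dx.
Qed.

Lemma ceil_div_mul_bounds (R : archiRealFieldType) (x p : R) :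
  0 <= x -> 0 < p ->
  exists k : nat, Num.ceil (x / p) = k%:Z /\ x <= k%:R * p <= x + p.
Proof.
move=> x0 p0.
have /andP[ceil_lt ceil_ge] := ceil_itv (x / p).
have [k ceilE] : exists k : nat, Num.ceil (x / p) = k%:Z.
  exists `|Num.ceil (x / p)|%N.
  by rewrite gez0_abs // ceil_ge0 (lt_le_trans _ (divr_ge0 x0 (ltW p0))).
rewrite ceilE in ceil_lt ceil_ge; exists k; split => //.
rewrite -ler_pdivrMr // ceil_ge /= -ler_pdivlMr // mulrDl divff ?gt_eqF //.
by move: ceil_lt; rewrite intrD => /ltW; lra.
Qed.

Section MinimumProbability.
Variables (V : finType) (R : realType) (pv : V -> R) (v0 : V).

Lemma minp_le (w : V) : minp pv v0 <= pv w.
Proof. by rewrite /minp (bigD1 w) //= ge_min lexx. Qed.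

Lemma minp_gt0 : (forall w, 0 < pv w) -> 0 < minp pv v0.
Proof.
move=> pv_gt0; apply: (big_ind (fun y => 0 < y)) => // x y.
by rewrite lt_min => -> ->.
Qed.

Lemma pp_gt0 : (forall w, 0 < pv w) -> 0 < pp pv v0.
Proof.
move=> pv_gt0; rewrite /pp mulr_gt0 ?minp_gt0 // invr_gt0 ltr0n.
by apply/card_gt0P; exists v0.
Qed.

Lemma pp_le_div (w : V) : pp pv v0 <= pv w / #|V|%:R.
Proof. by rewrite /pp mulrC ler_wpM2r ?invr_ge0 ?minp_le. Qed.

End MinimumProbability.

Theorem lemma1 (R : realType) (V : finType) (pv : V -> R)
  (hp : forall v, ((#|V|%:R) ^+ 2)^-1 <= pv v <= 1) :
  forall v : V,
    pv v * (1 - (expR 1)^-1) <= qv pv v /\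
    qv pv v <= pbar pv v /\
    pbar pv v <= pv v * (1 + (#|V|%:R)^-1).
Proof.
move=> v; set n : R := #|V|%:R; set p := pp pv v.
have n_ge1 : 1 <= n by rewrite /n ler1n; apply/card_gt0P; exists v.
have n_gt0 : 0 < n by lra.
have pv_gt0 w : 0 < pv w.
  by case/andP: (hp w) => + _; apply: lt_le_trans; rewrite invr_gt0 exprn_gt0.
have /andP[_ pv_le1] := hp v.
have pv01 : 0 <= pv v <= 1 by rewrite (ltW (pv_gt0 v)) pv_le1.
have p_gt0 : 0 < p := pp_gt0 v pv_gt0.
have p_le_pvn : p <= pv v / n := pp_le_div pv v v.
have [k [tvE /andP[pv_le_kp kp_le]]] :=
  ceil_div_mul_bounds (ltW (pv_gt0 v)) p_gt0.
have qvE : qv pv v = 1 - (1 - p) ^+ k by rewrite /qv /tv tvE.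
have pvn_le_pv : pv v / n <= pv v by rewrite ler_pdivrMr // ler_pMr.
have p_le1 : p <= 1 by lra.
split; [|split]; last by rewrite /pbar ge_min mulrC lexx.
- have := onemX_le_expR k p_le1.
  have : expR (- (k%:R * p)) <= expR (- pv v) by rewrite ler_expR lerN2.
  have := expR_chord pv01.
  rewrite qvE; lra.
- rewrite /pbar -/n le_min qvE; apply/andP; split.
    by have := bernoulli_ineq k p_le1; lra.
  by rewrite gerBl exprn_ge0 // subr_ge0.
Qed.
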